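(* Let $q$ be an odd prime, let $g$ be a primitive root modulo $q$, let $\omega=e^{2\pi i/(q-1)}$, and let $\chi_g$ be the Dirichlet character modulo $q$ with $\chi_g(n)=\omega^{\mathrm{ind}_g(n)}$ if $q\nmid n$ and $\chi_g(n)=0$ otherwise, where $\mathrm{ind}_g(n)$ is defined modulo $q-1$ by $n\equiv g^{\mathrm{ind}_g(n)}\pmod q$. For $1\le r\le q-2$ put $$C(q,r,\chi_g)=\prod_{p:\ \chi_g(p)=\omega^r}\Big(1-\frac{1}{p^{(q-1)/(r,q-1)}}\Big),$$ the product over all primes $p$ with $\chi_g(p)=\omega^r$, where $(r,q-1)$ denotes the greatest common divisor, and define $$C(q)=\prod_{r=1}^{q-2}C(q,r,\chi_g)^{(r,q-1)}.$$ For a prime $p\ne q$ let $f_p$ be the smallest integer $k\ge 1$ with $p^k\equiv 1\pmod q$. Then $$C(q)=\prod_{p\neq q,\ f_p\ge 2}\Big(1-\frac{1}{p^{f_p}}\Big)^{\frac{q-1}{f_p}}.$$ *)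

From HB Require Import structures.
From mathcomp Require Import all_boot all_order all_algebra.
From mathcomp Require Import all_classical all_reals all_analysis.
From mathcomp Require Import complex.
Set Implicit Arguments. Unset Strict Implicit. Unset Printing Implicit Defensive.
Import Order.TTheory GRing.Theory Num.Theory.
Local Open Scope ring_scope.

Definition primitive_root (q g : nat) : Prop :=
  (g %% q != 0)%N /\ forall k : nat, (0 < k < q.-1)%N -> (g ^ k %% q != 1)%N.

(* ind_g(n): the least k in {0,...,q-2} with g^k = n (mod q); for q not dividing n
   and g a primitive root this is a representative of ind_g(n) mod (q-1). *)
Definition ind (q g n : nat) : nat :=
  find (fun k => g ^ k %% q == n %% q)%N (iota 0 q.-1).

Definition omega (R : realType) (q : nat) : R[i] :=
  (cos (2 * pi / (q.-1)%:R) +i* sin (2 * pi / (q.-1)%:R))%C.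

Definition chi (R : realType) (q g n : nat) : R[i] :=
  if (q %| n)%N then 0 else omega R q ^+ ind q g n.

Definition Cqr_partial (R : realType) (q g r : nat) (N : nat) : R :=
  \prod_(p < N.+1 | prime p && (chi R q g p == omega R q ^+ r))
     (1 - ((p%:R : R) ^+ (q.-1 %/ gcdn r q.-1))^-1).

(* f_p: smallest k >= 1 with p^k = 1 (mod q) (searched among 1..q; for a prime
   p <> q such a k <= q-1 exists by Fermat, so this is the true minimum). *)
Definition fp (q p : nat) : nat :=
  (find (fun k => p ^ k.+1 %% q == 1)%N (iota 0 q)).+1.

Definition RHS_partial (R : realType) (q : nat) (N : nat) : R :=
  \prod_(p < N.+1 | prime p && (val p != q) && (2 <= fp q p)%N)
     (1 - ((p%:R : R) ^+ fp q p)^-1) ^+ (q.-1 %/ fp q p).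

From HB Require Import structures.
From mathcomp Require Import all_boot all_order all_algebra.
From mathcomp Require Import all_classical all_reals all_analysis.
From mathcomp Require Import complex.
From mathcomp Require Import finfield.
From mathcomp Require Import ring lra.
Set Implicit Arguments. Unset Strict Implicit. Unset Printing Implicit Defensive.
Import Order.TTheory GRing.Theory Num.Theory numFieldNormedType.Exports.
Local Open Scope classical_set_scope.
Local Open Scope ring_scope.

(* For a prime p <> q with k = ind_g p we have chi_g p = omega^k, and omega is a
   primitive (q-1)-th root of unity, so chi_g p = omega^r (1 <= r <= q-2) holds
   for r = k only.  Likewise g is a primitive (q-1)-th root of unity in F_q and
   p = g^k there, so the order f_p of p is (q-1)/(k, q-1).  Hence p contributes
   to C(q) exactly the factor (1 - p^-f_p)^((q-1)/f_p) when k <> 0, i.e. when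
   f_p >= 2, and nothing otherwise: the identity already holds for the partial
   products over p <= N.  These partial products have all factors in [0, 1], so
   they decrease and converge, and the identity passes to the limit. *)

Lemma find_iota (P : pred nat) m M : (m < M)%N -> P m ->
  (forall j, (j < m)%N -> ~~ P j) -> find P (iota 0 M) = m.
Proof.
move=> m_lt_M Pm P_lt_m.
have -> : M = (m + (M - m.+1).+1)%N by rewrite addnS -addSn subnKC.
rewrite iotaD find_cat.
have -> : has P (iota 0 m) = false.
  by apply/hasPn => j; rewrite mem_iota => /andP[_ /P_lt_m].
by rewrite size_iota /= add0n Pm addn0.
Qed.

Lemma gcdn_divn_gt1 k n : (k < n)%N -> (1 < n %/ gcdn k n)%N = (0 < k)%N.
Proof.
move=> k_lt_n; have n_gt0 : (0 < n)%N by apply: leq_ltn_trans k_lt_n.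
case: (posnP k) => [->|k_gt0]; first by rewrite gcd0n divnn n_gt0.
rewrite ltn_divRL ?dvdn_gcdr // mul1n (leq_ltn_trans _ k_lt_n) //.
exact: dvdn_leq k_gt0 (dvdn_gcdl k n).
Qed.

Lemma divn_divn_gcd k n : (0 < n)%N -> (n %/ (n %/ gcdn k n))%N = gcdn k n.
Proof. by move=> n_gt0; rewrite divnA ?dvdn_gcdr // mulKn. Qed.

Section PrimitiveRoots.
Variable R : nzRingType.

Lemma prim_root_least_exp n (z : R) : (0 < n)%N -> z ^+ n = 1 ->
  (forall k, (0 < k < n)%N -> z ^+ k != 1) -> n.-primitive_root z.
Proof.
move=> n_gt0 zn1 zk1; have [m prim_m m_dvd_n] := prim_order_exists n_gt0 zn1.
suff -> : n = m by [].
apply/eqP; rewrite eqn_leq (dvdn_leq n_gt0 m_dvd_n) andbT leqNgt.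
apply/negP => m_lt_n; have := zk1 m.
by rewrite (prim_order_gt0 prim_m) m_lt_n (prim_expr_order prim_m) eqxx => /(_ isT).
Qed.

Lemma find_prim_root n (z : R) M : n.-primitive_root z -> (n <= M)%N ->
  (find (fun k => z ^+ k.+1 == 1) (iota 0 M)).+1 = n.
Proof.
move=> prim_z n_le_M; have n_gt0 := prim_order_gt0 prim_z.
rewrite (@find_iota _ n.-1) ?prednK ?prim_expr_order // => j j_lt.
rewrite -(prim_order_dvd prim_z); apply: contraTN j_lt => /dvdn_leq.
by move=> /(_ isT); rewrite -ltnNge -ltnS prednK.
Qed.

End PrimitiveRoots.

Section RootsOfUnityInC.
Variable R : realType.

Lemma cis_exprn (t : R) k :
  (cos t +i* sin t)%C ^+ k = (cos (t *+ k) +i* sin (t *+ k))%C.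
Proof.
elim: k => [|k IHk]; first by rewrite expr0 !mulr0n cos0 sin0.
by rewrite exprS IHk mulrS cosD sinD; congr (_ +i* _)%C => /=; lra.
Qed.

Lemma cos_neq1 (x : R) : 0 < x < pi *+ 2 -> cos x != 1.
Proof.
move=> /andP[x_gt0 x_lt2pi].
have sin_half_gt0 : 0 < sin (x / 2).
  by apply: sin_gt0_pi; rewrite mulr2n in x_lt2pi; apply/andP; split; lra.
have -> : x = x / 2 + x / 2 by field.
have := cos2Dsin2 (x / 2); rewrite cosD; nra.
Qed.

Lemma cis_prim_root n : (0 < n)%N ->
  n.-primitive_root (cos (2 * pi / n%:R) +i* sin (2 * pi / n%:R) : R[i])%C.
Proof.
move=> n_gt0; have n_neq0 : n%:R != 0 :> R by rewrite pnatr_eq0 -lt0n.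
have angleE k : 2 * pi / n%:R *+ k = pi *+ 2 * (k%:R / n%:R) :> R.
  by rewrite -mulr_natr; field.
apply: prim_root_least_exp => // [|k /andP[k_gt0 k_lt_n]].
  by rewrite cis_exprn angleE divff // mulr1 cos2pi sin2pi.
rewrite cis_exprn; apply/eqP => -[cos1 _]; move/eqP: cos1; apply/negP.
apply: cos_neq1.
have k_n_gt0 : 0 < k%:R / n%:R :> R by rewrite divr_gt0 ?ltr0n.
have k_n_lt1 : k%:R / n%:R < 1 :> R by rewrite ltr_pdivrMr ?ltr0n // mul1r ltr_nat.
rewrite angleE; have := pi_gt0 R; rewrite mulr2n => pi_gt0; apply/andP; split; nra.
Qed.

Lemma omega_prim_root q : (1 < q)%N -> (q.-1).-primitive_root (omega R q).
Proof. by move=> q_gt1; apply: cis_prim_root; rewrite -ltnS prednK // ltnW. Qed.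

End RootsOfUnityInC.

Section PrimitiveRootModPrime.
Variable q : nat.
Hypothesis q_pr : prime q.
Local Notation n := q.-1.

Lemma eqFp_nat a b : ((a%:R : 'F_q) == b%:R) = (a == b %[mod q]).
Proof. by rewrite -val_eqE /= !val_Fp_nat. Qed.

Lemma Fp_nat_eq0 a : ((a%:R : 'F_q) == 0) = (q %| a)%N.
Proof. by rewrite -[0]/(0%:R) eqFp_nat mod0n. Qed.

Lemma Fp_nat_eq1 a : ((a%:R : 'F_q) == 1) = (a %% q == 1)%N.
Proof. by rewrite -[1 : 'F_q]/(1%:R) eqFp_nat [(1 %% q)%N]modn_small ?prime_gt1. Qed.

Lemma Fp_fermat (x : 'F_q) : x != 0 -> x ^+ n = 1.
Proof.
move=> x_neq0; apply: (mulIf x_neq0); rewrite mul1r -exprSr prednK ?prime_gt0 //.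
by rewrite -[RHS](expf_card x) card_Fp.
Qed.

Variable g : nat.
Hypothesis g_pr : primitive_root q g.

Lemma primitive_root_Fp : n.-primitive_root (g%:R : 'F_q).
Proof.
have [g_mod g_min] := g_pr; have g_neq0 : (g%:R : 'F_q) != 0 by rewrite Fp_nat_eq0.
apply: prim_root_least_exp; [| exact: Fp_fermat |] => [|k k_lt].
  by rewrite -ltnS prednK ?prime_gt0 // prime_gt1.
by rewrite -natrX Fp_nat_eq1 g_min.
Qed.

Lemma has_ind x : ~~ (q %| x)%N -> has (fun k => g ^ k %% q == x %% q)%N (iota 0 n).
Proof.
rewrite -Fp_nat_eq0 => x_neq0.
have [k /= xE] := prim_rootP primitive_root_Fp (Fp_fermat x_neq0).
by apply/hasP; exists (val k); rewrite ?mem_iota //= -eqFp_nat natrX xE.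
Qed.

Lemma ind_lt x : ~~ (q %| x)%N -> (ind q g x < n)%N.
Proof. by move/has_ind; rewrite has_find size_iota. Qed.

Lemma Fp_expr_ind x : ~~ (q %| x)%N -> (g%:R : 'F_q) ^+ ind q g x = x%:R.
Proof.
move=> qx; have := nth_find 0 (has_ind qx); rewrite nth_iota ?ind_lt //.
by rewrite add0n -eqFp_nat natrX => /eqP.
Qed.

Lemma fp_ind p : ~~ (q %| p)%N -> fp q p = (n %/ gcdn (ind q g p) n)%N.
Proof.
move=> qp; rewrite /fp.
under eq_find => k do rewrite -Fp_nat_eq1 natrX -Fp_expr_ind //.
apply: find_prim_root; first exact: exp_prim_root primitive_root_Fp _.
by rewrite (leq_trans (leq_div _ _)) ?leq_pred.
Qed.

End PrimitiveRootModPrime.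

Section EulerFactors.
Variables (R : realType) (q g : nat).
Hypotheses (q_pr : prime q) (g_pr : primitive_root q g).
Local Notation n := q.-1.
Let prim_omega : n.-primitive_root (omega R q) := omega_prim_root R (prime_gt1 q_pr).

Lemma chi_eq_omega p r : ~~ (q %| p)%N -> (r < n)%N ->
  (chi R q g p == omega R q ^+ r) = (ind q g p == r).
Proof.
move=> qp r_lt_n.
by rewrite /chi (negbTE qp) (eq_prim_root_expr prim_omega) !modn_small ?ind_lt.
Qed.

Lemma chi_q_neq_omega r : chi R q g q != omega R q ^+ r.
Proof.
rewrite /chi dvdnn eq_sym expf_eq0 (prim_root_eq0 prim_omega).
by rewrite gtn_eqF ?andbF ?(prim_order_gt0 prim_omega).
Qed.

Lemma prod_Cqr_factor p : prime p ->
  \prod_(1 <= r < n | chi R q g p == omega R q ^+ r)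
     (1 - ((p%:R : R) ^+ (n %/ gcdn r n))^-1) ^+ gcdn r n =
  if (p != q) && (1 < fp q p)%N
  then (1 - ((p%:R : R) ^+ fp q p)^-1) ^+ (n %/ fp q p) else 1.
Proof.
move=> p_pr; case: (eqVneq p q) => [->|p_neq_q] /=.
  by rewrite big_pred0 // => r; apply/negbTE/chi_q_neq_omega.
have qp : ~~ (q %| p)%N by rewrite dvdn_prime2 // eq_sym.
have k_lt_n := ind_lt q_pr g_pr qp.
rewrite (fp_ind q_pr g_pr qp) gcdn_divn_gt1 // divn_divn_gcd ?(leq_ltn_trans _ k_lt_n) //.
rewrite big_nat_cond (eq_bigl (fun r => (1 <= r < n) && (r == ind q g p))%N).
  by rewrite -big_nat_cond big_nat1_eq k_lt_n andbT.
by move=> r; apply: andb_id2l => /andP[_ r_lt_n]; rewrite chi_eq_omega // eq_sym.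
Qed.

Lemma RHS_partialE N :
  RHS_partial R q N = \prod_(1 <= r < n) Cqr_partial R q g r N ^+ gcdn r n.
Proof.
rewrite /RHS_partial /Cqr_partial big_mkcond.
under [RHS]eq_bigr => r _ do rewrite -prodrXl big_mkcond.
rewrite exchange_big; apply: eq_bigr => p _; rewrite -big_mkcond /=.
case: (boolP (prime p)) => p_pr; last by rewrite big_pred0.
by rewrite /= prod_Cqr_factor.
Qed.

End EulerFactors.

Lemma onem_inv_unit_interval (R : realFieldType) (x : R) :
  1 <= x -> 0 <= 1 - x^-1 <= 1.
Proof.
move=> x_ge1; have x_gt0 : 0 < x := lt_le_trans ltr01 x_ge1.
by rewrite subr_ge0 invf_le1 // x_ge1 gerBl invr_ge0 ltW.
Qed.

Lemma is_cvgn_prod_unit_interval (R : realType) (P : pred nat) (a : nat -> R) :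
  (forall p, P p -> 0 <= a p <= 1) -> cvgn (fun N => \prod_(p < N.+1 | P p) a p).
Proof.
move=> a01; have prod_ge0 N : 0 <= \prod_(p < N | P p) a p.
  by apply: prodr_ge0 => p /a01 /andP[].
apply: nonincreasing_is_cvgn; last by exists 0 => _ [N _ <-].
apply/nonincreasing_seqP => N; rewrite [leLHS]big_mkcond big_ord_recr -big_mkcond /=.
case: ifP => [/a01/andP[_ a_le1]|_]; last by rewrite mulr1.
exact: ler_piMr (prod_ge0 N.+1) a_le1.
Qed.

Lemma is_cvgn_Cqr_partial (R : realType) q g r : cvgn (Cqr_partial R q g r).
Proof.
apply: (is_cvgn_prod_unit_interval (P := fun p => prime p && (chi R q g p == _))
  (a := fun p => 1 - ((p%:R : R) ^+ (q.-1 %/ gcdn r q.-1))^-1)) => p /andP[p_pr _].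
by apply: onem_inv_unit_interval; rewrite exprn_ege1 // ler1n prime_gt0.
Qed.

Theorem proposition1 (R : realType) (q g : nat) :
  prime q -> odd q -> primitive_root q g ->
  exists C : nat -> R,
    (forall r : nat, (1 <= r <= q - 2)%N ->
       Cqr_partial R q g r @ \oo --> C r) /\
    RHS_partial R q @ \oo --> \prod_(1 <= r < q.-1) C r ^+ gcdn r q.-1.
Proof.
move=> q_pr _ g_pr.
exists (fun r => limn (Cqr_partial R q g r)).
split=> [r _|]; first exact: is_cvgn_Cqr_partial.
rewrite (funext (RHS_partialE R q_pr g_pr)).
apply: (cvg_big mul_continuous) => r _.
apply: (continuous_cvg _ (@exprn_continuous R _ _)).
exact: is_cvgn_Cqr_partial.
Qed.
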